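(* Let $S$ be a $\Gamma$-hemiring and let $\mu$ be a fuzzy h-ideal of $S$. Let $\beta\in(0,1]$ and $\alpha\in[0,1-\sup\{\mu(y):y\in S\}]$, and define $\mu_{\beta,\alpha}(y)=\beta\mu(y)+\alpha$ for $y\in S$. Then for every $x\in S$, $\langle x,\mu_{\beta,\alpha}\rangle$ is a fuzzy h-ideal of $S$.
   Context: A $\Gamma$-hemiring is a pair of additive commutative semigroups with zero $S$ and $\Gamma$ with a map $S\times\Gamma\times S\to S$, $(a,\alpha,b)\mapsto a\alpha b$, such that for all $a,b,c\in S$, $\alpha,\beta\in\Gamma$: $(a+b)\alpha c=a\alpha c+b\alpha c$; $a\alpha(b+c)=a\alpha b+a\alpha c$; $a(\alpha+\beta)b=a\alpha b+a\beta b$; $a\alpha(b\beta c)=(a\alpha b)\beta c$; $0\alpha a=0=a\alpha0$; $a0b=0=b0a$. A fuzzy h-ideal of $S$ is a map $\mu:S\to[0,1]$, not identically $0$, such that for all $x,y,a,b,z\in S$, $\gamma\in\Gamma$: $\mu(x+y)\ge\min\{\mu(x),\mu(y)\}$; $\mu(x\gamma y)\ge\mu(x)$ and $\mu(x\gamma y)\ge\mu(y)$; $x+a+z=b+z$ implies $\mu(x)\ge\min\{\mu(a),\mu(b)\}$. The extension of a fuzzy subset $\mu$ by $x$ is $\langle x,\mu\rangle(y)=\inf_{s\in S,\ \alpha,\gamma\in\Gamma}\mu(x\alpha s\gamma y)$ (here $\alpha,\gamma$ are bound variables ranging over $\Gamma$, unrelated to the real number $\alpha$ above). *)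

From HB Require Import structures.
From mathcomp Require Import all_boot all_order all_algebra.
From mathcomp Require Import all_classical all_reals.
Set Implicit Arguments. Unset Strict Implicit. Unset Printing Implicit Defensive.
Import Order.TTheory GRing.Theory Num.Theory.
Local Open Scope classical_set_scope.
Local Open Scope ring_scope.

Record GammaHemiring := {
  S_car : Type;
  G_car : Type;
  sadd : S_car -> S_car -> S_car;
  szero : S_car;
  gadd : G_car -> G_car -> G_car;
  gzero : G_car;
  tmul : S_car -> G_car -> S_car -> S_car;
  saddA : forall a b c, sadd a (sadd b c) = sadd (sadd a b) c;
  saddC : forall a b, sadd a b = sadd b a;
  sadd0 : forall a, sadd szero a = a;
  gaddA : forall a b c, gadd a (gadd b c) = gadd (gadd a b) c;
  gaddC : forall a b, gadd a b = gadd b a;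
  gadd0 : forall a, gadd gzero a = a;
  tmulDl : forall a b c al, tmul (sadd a b) al c = sadd (tmul a al c) (tmul b al c);
  tmulDr : forall a b c al, tmul a al (sadd b c) = sadd (tmul a al b) (tmul a al c);
  tmulDm : forall a b al be, tmul a (gadd al be) b = sadd (tmul a al b) (tmul a be b);
  tmulA : forall a b c al be, tmul a al (tmul b be c) = tmul (tmul a al b) be c;
  tmul0l : forall a al, tmul szero al a = szero;
  tmul0r : forall a al, tmul a al szero = szero;
  tmul0m : forall a b, tmul a gzero b = szero /\ tmul b gzero a = szero
}.

Definition fuzzy_h_ideal (R : realType) (H : GammaHemiring) (mu : S_car H -> R) : Prop :=
  (forall x, 0 <= mu x <= 1) /\
  (exists x, mu x != 0) /\
  (forall x y, mu (sadd x y) >= Order.min (mu x) (mu y)) /\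
  (forall x y (g : G_car H), mu (tmul x g y) >= mu x /\ mu (tmul x g y) >= mu y) /\
  (forall x a b z, sadd (sadd x a) z = sadd b z -> mu x >= Order.min (mu a) (mu b)).

Definition extension (R : realType) (H : GammaHemiring) (x : S_car H)
  (mu : S_car H -> R) : S_car H -> R :=
  fun y => inf [set v : R | exists (s : S_car H) (a g : G_car H),
                     v = mu (tmul (tmul x a s) g y)].

From mathcomp Require Import all_boot all_order all_algebra.
From mathcomp Require Import all_classical all_reals.
Set Implicit Arguments. Unset Strict Implicit. Unset Printing Implicit Defensive.
Import Order.TTheory GRing.Theory Num.Theory.
Local Open Scope classical_set_scope.
Local Open Scope ring_scope.

(* Since <x,nu>(y) is the infimum of nu (x a s g y), each fuzzy h-ideal axiom
   for <x,nu> follows from the same axiom for nu at the elements x a s g y: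
   left multiplication by x a s g preserves sums and h-closure equations and,
   by associativity, absorbs ternary products; <x,nu> dominates nu, so it does
   not vanish.  The rescaling t |-> beta t + alpha is nondecreasing, hence
   preserves the min-inequalities, and the bound on alpha keeps it in [0,1]. *)
Section Extension.
Variables (R : realType) (H : GammaHemiring) (x : S_car H) (nu : S_car H -> R).
Hypothesis nu_ge0 : forall y, 0 <= nu y.

Lemma extension_le y s a g : extension x nu y <= nu (tmul (tmul x a s) g y).
Proof.
apply: ge_inf; last by exists s, a, g.
by exists 0 => v [s' [a' [g' ->]]].
Qed.

Lemma le_extension y m : (forall s a g, m <= nu (tmul (tmul x a s) g y)) ->
  m <= extension x nu y.
Proof.
move=> m_le; apply: lb_le_inf; last by move=> v [s [a [g ->]]].
by exists (nu (tmul (tmul x (gzero H) (szero H)) (gzero H) y)),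
  (szero H), (gzero H), (gzero H).
Qed.

Lemma min_extension_le y z s a g :
  Order.min (extension x nu y) (extension x nu z) <=
  Order.min (nu (tmul (tmul x a s) g y)) (nu (tmul (tmul x a s) g z)).
Proof. by apply: le_min2; apply: extension_le. Qed.

End Extension.

Lemma fuzzy_h_ideal_extension (R : realType) (H : GammaHemiring)
    (nu : S_car H -> R) (x : S_car H) :
  fuzzy_h_ideal nu -> fuzzy_h_ideal (extension x nu).
Proof.
move=> [nu_01 [[y0 nu_y0] [nuD [nuM nuH]]]].
have nu_ge0 y : 0 <= nu y by case/andP: (nu_01 y).
have nu_le_ext y : nu y <= extension x nu y.
  by apply: le_extension => // s a g; apply: (nuM _ y g).2.
split.
  move=> y; apply/andP; split; first exact: le_extension.
  apply: le_trans (extension_le x nu_ge0 y (szero H) (gzero H) (gzero H)) _.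
  by case/andP: (nu_01 (tmul (tmul x (gzero H) (szero H)) (gzero H) y)).
split.
  exists y0; rewrite gt_eqF // (lt_le_trans _ (nu_le_ext y0)) //.
  by rewrite lt_def nu_y0 nu_ge0.
split.
  move=> y z; apply: le_extension => // s a g; rewrite tmulDr.
  exact: le_trans (min_extension_le x nu_ge0 _ _ _ _ _) (nuD _ _).
split.
  move=> y z g; split; apply: le_extension => // s a h.
    rewrite tmulA; apply: le_trans (nuM _ _ g).1; exact: extension_le.
  by rewrite tmulA -(tmulA x); apply: extension_le.
move=> y a b z yaz_bz; apply: le_extension => // s al g.
set X := tmul x al s.
have Xyaz_Xbz : sadd (sadd (tmul X g y) (tmul X g a)) (tmul X g z) =
                sadd (tmul X g b) (tmul X g z) by rewrite -!tmulDr yaz_bz.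
exact: le_trans (min_extension_le x nu_ge0 _ _ _ _ _) (nuH _ _ _ _ Xyaz_Xbz).
Qed.

Lemma homo_min_le d d' (T : orderType d) (T' : orderType d') (f : T -> T')
    (a b c : T) :
  {homo f : u v / (u <= v)%O} -> (Order.min a b <= c)%O ->
  (Order.min (f a) (f b) <= f c)%O.
Proof.
by move=> f_homo; rewrite !ge_min => /orP[] /f_homo ->; rewrite ?orbT.
Qed.

Lemma fuzzy_h_ideal_affine (R : realType) (H : GammaHemiring)
    (mu : S_car H -> R) (beta alpha : R) :
  fuzzy_h_ideal mu -> 0 < beta <= 1 -> 0 <= alpha <= 1 - sup (range mu) ->
  fuzzy_h_ideal (fun y => beta * mu y + alpha).
Proof.
move=> [mu_01 [[y0 mu_y0] [muD [muM muH]]]] /andP[beta_gt0 beta_le1].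
move=> /andP[alpha_ge0 alpha_le].
have f_homo : {homo (fun t => beta * t + alpha) : u v / u <= v}.
  by move=> u v uv; rewrite lerD2r ler_pM2l.
have mu_le_sup y : mu y <= sup (range mu).
  apply: ub_le_sup; last by exists y.
  by exists 1 => _ [z _ <-]; case/andP: (mu_01 z).
split.
  move=> y; have [mu_ge0 _] := andP (mu_01 y).
  rewrite addr_ge0 ?mulr_ge0 ?(ltW beta_gt0) //=.
  rewrite -(subrK (sup (range mu)) 1) addrC lerD //.
  exact: le_trans (ler_piMl mu_ge0 beta_le1) (mu_le_sup y).
split.
  exists y0; rewrite gt_eqF // ltr_wpDr // mulr_gt0 // lt_def mu_y0.
  by case/andP: (mu_01 y0).
split; first by move=> y z; apply: homo_min_le f_homo (muD y z).
split; first by move=> y z g; have [? ?] := muM y z g; split; apply: f_homo.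
by move=> y a b z eq_h; apply: homo_min_le f_homo (muH _ _ _ _ eq_h).
Qed.

Theorem proposition3p13 (R : realType) (H : GammaHemiring) (mu : S_car H -> R)
  (beta alpha : R) :
  fuzzy_h_ideal mu ->
  0 < beta <= 1 ->
  0 <= alpha <= 1 - sup (range mu) ->
  forall x : S_car H,
    fuzzy_h_ideal (extension x (fun y => beta * mu y + alpha)).
Proof.
move=> mu_ideal beta_01 alpha_range x.
exact/fuzzy_h_ideal_extension/fuzzy_h_ideal_affine.
Qed.
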